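(* Assume (A1). For all $\epsilon>0$ small enough there exists a constant $C_1<\infty$ such that for all $x\in\mathbb{Z}^2$ and all integers $k>\|x\|_\infty$, \[ \mathbb{P}_\epsilon\bigl(m_A(x)=k\bigr)\le\frac{C_1}{(k-\|x\|_\infty)^{\alpha-1}}. \]
   Context: Couplings $J_{x,y}=J_{x-y}$ with $J_x=J_{-x}\ge0$, $\sum_{x\in\mathbb{Z}^2}J_x=1$; (A1): there exist $\alpha>4$, $J\ge0$ with $J_x\le J\|x\|_1^{-\alpha}$ for $x\ne0$. For $\epsilon\in(0,1]$, $\mathbb{P}_\epsilon$ is independent Bernoulli bond percolation on the set of unordered pairs $\{x,y\}$ of distinct vertices of $\mathbb{Z}^2$, each open with probability $\epsilon J_{x,y}$; $A$ is the set of open edges and $u\leftrightarrow v$ means $u,v$ are joined by a finite chain of open edges (or $u=v$). $m_A(u)=\sup\{\|v\|_\infty: v\leftrightarrow u\}$. *)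

From HB Require Import structures.
From mathcomp Require Import all_boot all_order all_algebra.
From mathcomp Require Import all_classical all_reals all_analysis.
From Stdlib Require Import Relations.
Set Implicit Arguments. Unset Strict Implicit. Unset Printing Implicit Defensive.
Import Order.TTheory GRing.Theory Num.Theory.
Local Open Scope classical_set_scope.
Local Open Scope ring_scope.

Definition Z2 := (int * int)%type.

Definition norm1 (x : Z2) : nat := (`|x.1| + `|x.2|)%N.
Definition normi (x : Z2) : nat := maxn `|x.1|%N `|x.2|%N.
Definition subZ2 (x y : Z2) : Z2 := (x.1 - y.1, x.2 - y.2).

(* a strict total order on Z^2, used to represent unordered pairs {x,y}, x<>y *)
Definition lexlt (u v : Z2) : bool := (u.1 < v.1) || ((u.1 == v.1) && (u.2 < v.2)).

(* the edges: unordered pairs of distinct vertices, represented as (u,v) with u <lex v *)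
Definition edge := {e : Z2 * Z2 | lexlt e.1 e.2}.

(* configuration w : edge -> bool (w e = true iff e is open); adjacency and connection *)
Definition adj (w : edge -> bool) (u v : Z2) : Prop :=
  exists e : edge, w e /\ (val e = (u, v) \/ val e = (v, u)).

Definition conn (w : edge -> bool) : Z2 -> Z2 -> Prop := clos_refl_trans Z2 (adj w).

Definition mA (R : realType) (w : edge -> bool) (u : Z2) : \bar R :=
  ereal_sup [set ((normi v)%:R)%:E | v in [set v | conn w v u]].

Definition mutually_independent (R : realType) d (T : measurableType d)
  (P : probability T R) (I : eqType) (E : I -> set T) : Prop :=
  forall s : seq I, uniq s ->
    P (\bigcap_(i in [set` s]) E i) = (\prod_(i <- s) P (E i))%E.

Definition bernoulli_percolation (R : realType) d (T : measurableType d)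
  (P : probability T R) (omega : T -> edge -> bool) (p : edge -> R) : Prop :=
  [/\ forall e, measurable [set t | omega t e],
      forall e, P [set t | omega t e] = (p e)%:E
    & mutually_independent P (fun e => [set t | omega t e])].

Definition eps_prob (R : realType) (J : Z2 -> R) (eps : R) (e : edge) : R :=
  eps * J (subZ2 (val e).1 (val e).2).

(* The event [m_A(x) = k] needs an open self-avoiding path from [x] to the sphere
   [{v : |v|_oo = k}], so by the union bound and independence its probability is at most the
   sum over such paths of the product of [eps J] over their steps.  Group the paths by their
   endpoint [v].  A walk of [L] steps from [x] to [v] has a step of length at least
   [|v - x|_1 / L]; bounding the weight of that step by the decay of [J] and summing the other
   steps freely (using [sum J <= 1]) bounds the walks of length [L] by
   [L (2 ^ alpha eps) ^ L Jc / |v - x|_1 ^ alpha], which is summable in [L] when [eps] is small.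
   Finally, on each side of the sphere [|v - x|_1 >= (k - |x|_oo) + |j|] with [j] running over
   distinct integers, which sums to [O((k - |x|_oo) ^ (1 - alpha))]. *)

From HB Require Import structures.
From mathcomp Require Import all_boot all_order all_algebra.
From mathcomp Require Import all_classical all_reals all_analysis.
From mathcomp Require Import zify ring lra.
From Stdlib Require Import Relations.
Import Order.TTheory GRing.Theory Num.Theory.
Local Open Scope classical_set_scope.
Local Open Scope ring_scope.

Section SeqSums.
Context {R : numDomainType}.

Lemma sumr_pred1_uniq (I : eqType) (s : seq I) (a : I) (F : I -> R) :
  uniq s -> a \in s -> \sum_(i <- s | a == i) F i = F a.
Proof.
move=> us a_s; rewrite big_mkcond (bigD1_seq a) //= eqxx big1 ?addr0 // => i.
by rewrite eq_sym => /negbTE ->.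
Qed.

Lemma sumr_partition_seq {I J : eqType} (s : seq I) (f : I -> J) (F : I -> R) :
  \sum_(i <- s) F i = \sum_(j <- undup (map f s)) \sum_(i <- s | f i == j) F i.
Proof.
under [RHS]eq_bigr do rewrite big_mkcond.
rewrite exchange_big /=; apply: eq_big_seq => i i_s.
by rewrite -big_mkcond sumr_pred1_uniq ?undup_uniq // mem_undup map_f.
Qed.

Lemma ler_sum_sub_uniq (I : eqType) (s s' : seq I) (F : I -> R) :
  uniq s -> uniq s' -> {subset s <= s'} -> (forall i, 0 <= F i) ->
  \sum_(i <- s) F i <= \sum_(i <- s') F i.
Proof.
move=> us us' ss' F0; rewrite [leRHS](bigID (mem s)) /= -[leLHS]addr0.
apply: lerD; last exact: sumr_ge0.
have pe : perm_eq [seq i <- s' | i \in s] s.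
  apply: uniq_perm; rewrite ?filter_uniq // => i.
  by rewrite mem_filter andb_idr // => /ss'.
by rewrite -(perm_big _ pe) big_filter.
Qed.

Lemma ler_sum_cover {I : eqType} {s : seq I} (P Q : pred I) {F : I -> R} :
  (forall i, 0 <= F i) -> (forall i, i \in s -> P i || Q i) ->
  \sum_(i <- s) F i <= \sum_(i <- s | P i) F i + \sum_(i <- s | Q i) F i.
Proof.
move=> F0 PQ; rewrite (big_mkcond P) (big_mkcond Q) -big_split /=.
rewrite big_seq [leRHS]big_seq; apply: ler_sum => i /PQ.
by case: (P i) (Q i) => [] [] //= _; rewrite ?addr0 ?add0r ?lerDl ?F0.
Qed.

Lemma prodr_const_seq (I : Type) (s : seq I) (c : R) :
  \prod_(i <- s) c = c ^+ size s.
Proof. by elim: s => [|i s IH]; rewrite ?big_nil ?big_cons ?IH ?exprS. Qed.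

(* Expanding [(\sum_u J u) ^ m]: distinct words of length [m] have total weight at most [1]. *)
Lemma sum_prod_words_le1 {I : eqType} {J : I -> R} :
  (forall i, 0 <= J i) -> (forall U : seq I, uniq U -> \sum_(u <- U) J u <= 1) ->
  forall m (W : seq (seq I)), uniq W -> (forall w, w \in W -> size w = m) ->
  \sum_(w <- W) \prod_(i <- w) J i <= 1.
Proof.
move=> J0 JU; elim=> [|m IH] W uW sW.
  apply: (@le_trans _ _ (\sum_(w <- [:: [::]]) \prod_(i <- w) J i)).
    apply: ler_sum_sub_uniq => //; last by move=> w; rewrite prodr_ge0.
    by move=> w /sW/size0nil ->; rewrite mem_seq1.
  by rewrite big_seq1 big_nil.
case: W uW sW => [|[|i0 w0] W0] uW sW; first by rewrite big_nil.
  by have := sW _ (mem_head _ _).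
set W := (i0 :: w0) :: W0 in uW sW *.
rewrite (sumr_partition_seq _ (head i0)).
apply: le_trans (JU _ (undup_uniq (map (head i0) W))); apply: ler_sum => a _.
pose Wa := [seq behead w | w <- W & head i0 w == a].
have -> : \sum_(w <- W | head i0 w == a) \prod_(i <- w) J i =
          J a * \sum_(w <- Wa) \prod_(i <- w) J i.
  rewrite big_map big_filter mulr_sumr big_seq_cond [RHS]big_seq_cond.
  apply: eq_bigr => w /andP[wW /eqP <-].
  by case: w wW => [/sW //|i w _]; rewrite big_cons.
rewrite -[leRHS]mulr1; apply: ler_wpM2l => //; apply: IH.
  rewrite map_inj_in_uniq ?filter_uniq // => w1 w2.
  rewrite !mem_filter => /andP[/eqP h1 /sW s1] /andP[/eqP h2 /sW s2].
  by case: w1 w2 h1 h2 s1 s2 => [|? ?] [|? ?] //= -> -> _ _ ->.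
by move=> ? /mapP[w]; rewrite mem_filter => /andP[_ wW] ->; rewrite size_behead sW.
Qed.

End SeqSums.

Definition origin : Z2 := (0, 0).

Definition sumZ2 (s : seq Z2) : Z2 := (\sum_(y <- s) y.1, \sum_(y <- s) y.2).

Definition rem_nth {T : Type} (i : nat) (s : seq T) := take i s ++ drop i.+1 s.

Lemma size_rem_nth (T : Type) i (s : seq T) :
  (i < size s)%N -> size (rem_nth i s) = (size s).-1.
Proof. by move=> i_s; rewrite /rem_nth size_cat size_take size_drop i_s; lia. Qed.

Lemma big_rem_nth {R : Type} {idx : R} {op : Monoid.com_law idx} {T : Type} (x0 : T)
    {F : T -> R} {s : seq T} {i} : (i < size s)%N ->
  \big[op/idx]_(y <- s) F y = op (F (nth x0 s i)) (\big[op/idx]_(y <- rem_nth i s) F y).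
Proof.
move=> i_s; rewrite -{1}(cat_take_drop i s) (drop_nth x0) // big_cat big_cons.
by rewrite /rem_nth big_cat Monoid.mulmCA.
Qed.

Lemma norm1_sumZ2 (s : seq Z2) : (norm1 (sumZ2 s) <= \sum_(y <- s) norm1 y)%N.
Proof.
elim: s => [|y s IH]; first by rewrite /sumZ2 /norm1 !big_nil.
by move: IH; rewrite /sumZ2 /norm1 !big_cons /=; lia.
Qed.

Lemma exists_long_step (s : seq Z2) : (0 < norm1 (sumZ2 s))%N ->
  exists2 i, (i < size s)%N & (norm1 (sumZ2 s) <= size s * norm1 (nth origin s i))%N.
Proof.
set D := norm1 _ => D_gt0; pose long y := (D <= size s * norm1 y)%N.
have [s_long|] := boolP (has long s).
  by exists (find long s); [rewrite -has_find | exact: (nth_find origin s_long)].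
move/hasPn => short; have := norm1_sumZ2 s; rewrite -/D => D_le.
have : (size s * D <= size s * D.-1)%N.
  apply: (leq_trans (leq_mul (leqnn _) D_le)); rewrite big_distrr /=.
  have -> : (size s * D.-1 = \sum_(y <- s) D.-1)%N.
    by rewrite big_const_seq count_predT iter_addn_0 mulnC.
  rewrite big_seq_cond [X in (_ <= X)%N]big_seq_cond; apply: leq_sum => y /andP[ys _].
  by have := short y ys; rewrite /long -ltnNge; lia.
have s_gt0 : (0 < size s)%N.
  by move: D_gt0; rewrite /D; case: (s) => //; rewrite /sumZ2 !big_nil.
by rewrite leq_mul2l; lia.
Qed.

Lemma rem_nth_inj i (s t : seq Z2) : (i < size s)%N -> size s = size t ->
  sumZ2 s = sumZ2 t -> rem_nth i s = rem_nth i t -> s = t.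
Proof.
move=> i_s st sum_st /eqP; rewrite eqseq_cat ?size_take -?st ?i_s //.
case/andP => /eqP take_st /eqP drop_st.
have i_t : (i < size t)%N by rewrite -st.
have split_nth u : (i < size u)%N -> u = take i u ++ nth origin u i :: drop i.+1 u.
  by move=> i_u; rewrite -drop_nth // cat_take_drop.
rewrite (split_nth s i_s) (split_nth t i_t) take_st drop_st; congr (_ ++ _ :: _).
move: sum_st; rewrite (split_nth s i_s) (split_nth t i_t).
rewrite /sumZ2 !big_cat !big_cons /= take_st drop_st => -[h1 h2].
move: (nth _ s i) (nth _ t i) h1 h2 => [a1 a2] [b1 b2] /= /addrI/addIr -> /addrI/addIr -> //.
Qed.

Lemma sum_halfpow_uniq_le (R : realFieldType) (M : seq nat) :
  uniq M -> \sum_(L <- M) (2^-1 : R) ^+ L <= 2.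
Proof.
move=> uM; pose N := (\max_(L <- M) L).+1.
have halfpow_ge0 L : 0 <= (2^-1 : R) ^+ L by rewrite exprn_ge0.
apply: (@le_trans _ _ (\sum_(0 <= L < N) (2^-1 : R) ^+ L)).
  apply: ler_sum_sub_uniq; rewrite ?iota_uniq // => L LM.
  by rewrite mem_index_iota ltnS (@leq_bigmax_seq _ _ xpredT id).
have -> : \sum_(0 <= L < N) (2^-1 : R) ^+ L = 2 - 2 * 2^-1 ^+ N.
  elim: N => [|N IH]; first by rewrite big_nil expr0; lra.
  by rewrite big_nat_recr //= IH exprS; lra.
by have := halfpow_ge0 N; lra.
Qed.

Lemma natr_mul_powR_le (R : realType) (alpha : R) (L : nat) : 0 <= alpha ->
  L%:R * L%:R `^ alpha <= (2 * 2 `^ alpha) ^+ L.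
Proof.
move=> alpha_ge0; have L_le : (L%:R : R) <= 2 ^+ L.
  by rewrite -natrX ler_nat ltnW // ltn_expl.
rewrite exprMn ler_pM ?powR_ge0 //.
rewrite -(powR_mulrn _ (powR_ge0 _ _)) -powRrM mulrC powRrM powR_mulrn //.
by rewrite ge0_ler_powR ?nnegrE ?exprn_ge0.
Qed.

Section TwoPointBound.
Variables (R : realType) (J : Z2 -> R) (alpha Jc eps : R).
Hypothesis J_ge0 : forall y, 0 <= J y.
Hypothesis J_sum_le1 : forall U : seq Z2, uniq U -> \sum_(u <- U) J u <= 1.
Hypothesis alpha_ge0 : 0 <= alpha.
Hypothesis Jc_ge0 : 0 <= Jc.
Hypothesis J_decay : forall y : Z2, y != (0, 0) -> J y <= Jc * (norm1 y)%:R `^ (- alpha).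
Hypothesis eps_ge0 : 0 <= eps.
Hypothesis eps_small : 4 * 2 `^ alpha * eps <= 1.

Lemma J_long_step_le (y : Z2) (L D : nat) :
  (0 < D)%N -> (D <= L * norm1 y)%N -> J y <= Jc * L%:R `^ alpha / D%:R `^ alpha.
Proof.
move=> D_gt0 D_le; have y_gt0 : (0 < norm1 y)%N by move: D_le; case: (norm1 y); rewrite ?muln0; lia.
have y_neq0 : y != (0, 0) by apply: contraTneq y_gt0 => ->.
apply: le_trans (J_decay _ y_neq0) _; rewrite -mulrA ler_wpM2l // powRN.
rewrite ler_pdivlMr ?powR_gt0 ?ltr0n // mulrC ler_pdivrMr ?powR_gt0 ?ltr0n //.
by rewrite -powRM ?ler0n // ge0_ler_powR ?nnegrE ?ler0n // -natrM ler_nat.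
Qed.

Variable z : Z2.
Hypothesis z_neq0 : (0 < norm1 z)%N.
Let D := norm1 z.

(* A walk with [L] steps from [0] to [z] has a step of length [>= D / L], whose weight
   carries the decay [(L / D) ^ alpha]; the remaining steps are summed freely. *)
Definition long_step_weight (L : nat) : R :=
  eps ^+ L * (Jc * L%:R `^ alpha / D%:R `^ alpha).

Lemma long_step_weight_ge0 L : 0 <= long_step_weight L.
Proof. by rewrite mulr_ge0 ?exprn_ge0 ?divr_ge0 ?mulr_ge0 ?powR_ge0. Qed.

Lemma prod_steps_le (ys : seq Z2) : sumZ2 ys = z ->
  \prod_(y <- ys) (eps * J y) <=
    long_step_weight (size ys) * \sum_(i < size ys) \prod_(y <- rem_nth i ys) J y.
Proof.
move=> ys_z; have [i i_ys long_i] :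
    exists2 i, (i < size ys)%N & (D <= size ys * norm1 (nth origin ys i))%N.
  by rewrite /D -ys_z; apply: exists_long_step; rewrite ys_z.
rewrite big_split /= prodr_const_seq (big_rem_nth origin i_ys) /=.
rewrite (bigD1 (Ordinal i_ys)) //= mulrDr.
apply: ler_wpDr.
  by rewrite mulr_ge0 ?long_step_weight_ge0 ?sumr_ge0 // => j _; rewrite prodr_ge0.
rewrite /long_step_weight -mulrA ler_wpM2l ?exprn_ge0 // ler_wpM2r ?prodr_ge0 //.
exact: J_long_step_le long_i.
Qed.

Lemma sum_prod_steps_size_le (S : seq (seq Z2)) (L : nat) :
  uniq S -> (forall ys, ys \in S -> sumZ2 ys = z) ->
  \sum_(ys <- S | size ys == L) \prod_(y <- ys) (eps * J y) <= L%:R * long_step_weight L.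
Proof.
move=> uS S_z.
apply: (@le_trans _ _ (\sum_(ys <- S | size ys == L) long_step_weight L *
                         \sum_(i < L) \prod_(y <- rem_nth i ys) J y)).
  rewrite big_seq_cond [leRHS]big_seq_cond.
  by apply: ler_sum => ys /andP[/S_z/prod_steps_le + /eqP <-].
rewrite -mulr_sumr exchange_big /= mulrC ler_wpM2r ?long_step_weight_ge0 //.
apply: (@le_trans _ _ (\sum_(i < L) 1)); last by rewrite sumr_const card_ord.
apply: ler_sum => i _.
rewrite -big_filter; set S_L := [seq ys <- S | _].
have -> : \sum_(ys <- S_L) \prod_(y <- rem_nth i ys) J y =
          \sum_(t <- map (rem_nth i) S_L) \prod_(y <- t) J y by rewrite big_map.
apply: (sum_prod_words_le1 J_ge0 J_sum_le1 L.-1).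
  rewrite map_inj_in_uniq ?filter_uniq // => s t.
  rewrite !mem_filter => /andP[/eqP s_L sS] /andP[/eqP t_L tS].
  by apply: rem_nth_inj; rewrite ?s_L ?t_L ?S_z.
by move=> ? /mapP[ys]; rewrite mem_filter => /andP[/eqP ys_L _] ->; rewrite size_rem_nth ys_L.
Qed.

Lemma natr_mul_long_step_weight_le L :
  L%:R * long_step_weight L <= Jc / D%:R `^ alpha * 2^-1 ^+ L.
Proof.
have -> : L%:R * long_step_weight L =
          Jc / D%:R `^ alpha * (L%:R * L%:R `^ alpha * eps ^+ L).
  by rewrite /long_step_weight; ring.
rewrite ler_wpM2l ?divr_ge0 ?powR_ge0 //.
apply: (@le_trans _ _ ((2 * 2 `^ alpha) ^+ L * eps ^+ L)).
  by rewrite ler_wpM2r ?exprn_ge0 ?natr_mul_powR_le.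
rewrite -exprMn lerXn2r ?nnegrE ?mulr_ge0 ?powR_ge0 ?invr_ge0 //.
by move: eps_small; set b := 2 `^ alpha; lra.
Qed.

Lemma sum_prod_steps_le (S : seq (seq Z2)) :
  uniq S -> (forall ys, ys \in S -> sumZ2 ys = z) ->
  \sum_(ys <- S) \prod_(y <- ys) (eps * J y) <= 2 * Jc / D%:R `^ alpha.
Proof.
move=> uS S_z; rewrite (sumr_partition_seq _ size).
apply: (@le_trans _ _ (\sum_(L <- undup (map size S)) Jc / D%:R `^ alpha * 2^-1 ^+ L)).
  apply: ler_sum => L _; apply: le_trans (natr_mul_long_step_weight_le L).
  exact: sum_prod_steps_size_le.
have -> : 2 * Jc / D%:R `^ alpha = Jc / D%:R `^ alpha * 2 by ring.
by rewrite -mulr_sumr ler_wpM2l ?divr_ge0 ?powR_ge0 ?sum_halfpow_uniq_le ?undup_uniq.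
Qed.

End TwoPointBound.

Section InversePowerSums.
Variables (R : realType) (alpha : R).

Lemma inv_sqr_le_telescope (t : R) : 1 <= t ->
  (t ^+ 2)^-1 <= (t - 2^-1)^-1 - (t + 2^-1)^-1.
Proof.
move=> t_ge1; have -> : (t - 2^-1)^-1 - (t + 2^-1)^-1 = (t ^+ 2 - 4^-1)^-1.
  by field; apply/and3P; split; rewrite gt_eqF //; nra.
by rewrite lef_pV2 ?posrE; nra.
Qed.

(* Comparison with [t ^ -2] turns the sum over a half-line into a telescoping sum. *)
Lemma inv_powR_le_telescope (r : R) (m : nat) : 2 <= alpha -> 1 <= r ->
  ((r + m%:R) `^ alpha)^-1 <=
    r / r `^ (alpha - 1) * ((r + m%:R - 2^-1)^-1 - (r + m.+1%:R - 2^-1)^-1).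
Proof.
move=> alpha_ge2 r_ge1; have alpha_gt0 : 0 < alpha by lra.
set t := r + m%:R.
have r_le_t : r <= t by rewrite /t lerDl.
have -> : r + m.+1%:R - 2^-1 = t + 2^-1 by rewrite /t -natr1; lra.
apply: (@le_trans _ _ (r / r `^ (alpha - 1) * (t ^+ 2)^-1)); last first.
  by rewrite ler_wpM2l ?divr_ge0 ?powR_ge0 ?inv_sqr_le_telescope //; lra.
have powR_split (u a b c : R) : 0 < a -> b + c = a -> u `^ a = u `^ b * u `^ c.
  by move=> a_gt0 bc; rewrite -powRD bc // gt_eqF.
have r_pos : 0 < r `^ (alpha - 2) by apply: powR_gt0; lra.
rewrite (powR_split t alpha (alpha - 2) 2) ?powR_mulrn; try lra.
rewrite (powR_split r (alpha - 1) (alpha - 2) 1) ?powRr1; try lra.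
have -> : r / (r `^ (alpha - 2) * r) * (t ^+ 2)^-1 = (r `^ (alpha - 2) * t ^+ 2)^-1.
  by field; apply/and3P; split; rewrite gt_eqF //; lra.
rewrite lef_pV2 ?posrE ?mulr_gt0 ?exprn_gt0 ?powR_gt0 //; try lra.
by rewrite ler_wpM2r ?exprn_ge0 ?ge0_ler_powR ?nnegrE //; lra.
Qed.

Lemma sum_inv_powR_shift_nat_le (r : R) (M : seq nat) : 2 <= alpha -> 1 <= r -> uniq M ->
  \sum_(m <- M) ((r + m%:R) `^ alpha)^-1 <= 2 / r `^ (alpha - 1).
Proof.
move=> alpha_ge2 r_ge1 uM; pose K := (\max_(m <- M) m).+1.
apply: (@le_trans _ _ (\sum_(0 <= m < K) ((r + m%:R) `^ alpha)^-1)).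
  apply: ler_sum_sub_uniq; rewrite ?iota_uniq //; last by move=> m; rewrite invr_ge0 powR_ge0.
  by move=> m mM; rewrite mem_index_iota ltnS (@leq_bigmax_seq _ _ xpredT id).
pose f (m : nat) : R := (r + m%:R - 2^-1)^-1.
apply: (@le_trans _ _ (\sum_(0 <= m < K) r / r `^ (alpha - 1) * (f m - f m.+1))).
  by apply: ler_sum => m _; apply: inv_powR_le_telescope.
rewrite -mulr_sumr; under eq_bigr do rewrite -opprB.
rewrite sumrN telescope_sumr // opprB.
have r_pos : 0 < r `^ (alpha - 1) by apply: powR_gt0; lra.
have rf0 : r * f 0%N <= 2 by rewrite /f addr0 -/(r / _) ler_pdivrMr; lra.
have rfK : 0 <= r * f K by rewrite mulr_ge0 ?invr_ge0 //; [lra | have := ler0n R K; lra].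
have -> : r / r `^ (alpha - 1) * (f 0%N - f K) = (r * f 0%N - r * f K) / r `^ (alpha - 1).
  by ring.
by apply: ler_wpM2r; [rewrite invr_ge0 ltW | lra].
Qed.

Lemma sum_inv_powR_shift_int_le (r : R) (a : int) (B : seq int) :
  2 <= alpha -> 1 <= r -> uniq B ->
  \sum_(b <- B) ((r + (absz (b - a))%:R) `^ alpha)^-1 <= 4 / r `^ (alpha - 1).
Proof.
move=> alpha_ge2 r_ge1 uB; rewrite (bigID (fun b => a <= b)) /=.
have half_line (P : pred int) : {in P &, injective (fun b => absz (b - a))} ->
    \sum_(b <- B | P b) ((r + (absz (b - a))%:R) `^ alpha)^-1 <= 2 / r `^ (alpha - 1).
  move=> injP.
  have -> : \sum_(b <- B | P b) ((r + (absz (b - a))%:R) `^ alpha)^-1 =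
            \sum_(m <- [seq absz (b - a) | b <- B & P b]) ((r + m%:R) `^ alpha)^-1.
    by rewrite big_map big_filter.
  apply: sum_inv_powR_shift_nat_le; rewrite // map_inj_in_uniq ?filter_uniq // => b c.
  by rewrite !mem_filter => /andP[Pb _] /andP[Pc _]; apply: injP.
have inj_ge : {in [pred b | a <= b] &, injective (fun b => absz (b - a))}.
  by move=> b c; rewrite !inE; lia.
have inj_lt : {in [pred b | ~~ (a <= b)] &, injective (fun b => absz (b - a))}.
  by move=> b c; rewrite !inE; lia.
by move: (half_line _ inj_ge) (half_line _ inj_lt) => /= ? ?; lra.
Qed.

End InversePowerSums.

Section SphereSums.
Variables (R : realType) (alpha : R) (x : Z2) (k : nat).
Let r : R := (k - normi x)%N%:R.

Lemma sum_sphere_side_le (p q : Z2 -> int) {V : seq Z2} :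
  2 <= alpha -> (normi x < k)%N -> (absz (p x) <= normi x)%N ->
  (forall u, norm1 (subZ2 u x) = absz (p u - p x) + absz (q u - q x))%N ->
  (forall u v, p u = p v -> q u = q v -> u = v) -> uniq V ->
  \sum_(v <- V | absz (p v) == k) (((norm1 (subZ2 v x))%:R : R) `^ alpha)^-1
    <= 8 / r `^ (alpha - 1).
Proof.
move=> alpha_ge2 x_lt_k px_le norm1_pq pq_inj uV.
have r_ge1 : 1 <= r by rewrite /r ler1n subn_gt0.
pose g v := ((r + (absz (q v - q x))%:R) `^ alpha)^-1.
have g_ge0 v : 0 <= g v by rewrite invr_ge0 powR_ge0.
apply: (@le_trans _ _ (\sum_(v <- V | absz (p v) == k) g v)).
  rewrite big_seq_cond [leRHS]big_seq_cond; apply: ler_sum => v /andP[_ /eqP pv_k].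
  have r_gt0 : 0 < r + (absz (q v - q x))%:R by have := ler0n R (absz (q v - q x)); lra.
  have n_ge : r + (absz (q v - q x))%:R <= (norm1 (subZ2 v x))%:R.
    by rewrite /r -natrD ler_nat norm1_pq; lia.
  have n_gt0 := lt_le_trans r_gt0 n_ge.
  rewrite lef_pV2 ?posrE ?powR_gt0 //.
  by apply: ge0_ler_powR; rewrite ?nnegrE //; lra.
rewrite -big_filter; set Vk := [seq v <- V | _].
apply: le_trans (ler_sum_cover (fun v => p v == k) (fun v => p v == - k%:Z) g_ge0 _) _.
  by move=> v; rewrite mem_filter => /andP[/eqP]; lia.
have fibre c : \sum_(v <- Vk | p v == c) g v <= 4 / r `^ (alpha - 1).
  have -> : \sum_(v <- Vk | p v == c) g v =
            \sum_(b <- [seq q v | v <- Vk & p v == c]) ((r + (absz (b - q x))%:R) `^ alpha)^-1.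
    by rewrite big_map big_filter.
  apply: sum_inv_powR_shift_int_le; rewrite // map_inj_in_uniq ?filter_uniq // => u v.
  by rewrite !mem_filter => /andP[/eqP pu _] /andP[/eqP pv _] /pq_inj; apply; rewrite pu pv.
by move: (fibre k) (fibre (- k%:Z)); lra.
Qed.

Lemma sum_sphere_inv_powR_le (V : seq Z2) :
  2 <= alpha -> (normi x < k)%N -> uniq V -> (forall v, v \in V -> normi v = k) ->
  \sum_(v <- V) (((norm1 (subZ2 v x))%:R : R) `^ alpha)^-1 <= 16 / r `^ (alpha - 1).
Proof.
move=> alpha_ge2 x_lt_k uV V_k.
have F_ge0 v : 0 <= (((norm1 (subZ2 v x))%:R : R) `^ alpha)^-1 by rewrite invr_ge0 powR_ge0.
apply: le_trans (ler_sum_cover (fun v => absz v.1 == k) (fun v => absz v.2 == k) F_ge0 _) _.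
  by move=> [a b] /V_k; rewrite /normi /=; lia.
have pair_inj (u v : Z2) : u.1 = v.1 -> u.2 = v.2 -> u = v.
  by case: u v => [? ?] [? ?] /= -> ->.
have := sum_sphere_side_le fst snd alpha_ge2 x_lt_k (leq_maxl _ _) (fun u => erefl) pair_inj uV.
have := sum_sphere_side_le snd fst alpha_ge2 x_lt_k (leq_maxr _ _) (fun u => addnC _ _)
          (fun u v e2 e1 => pair_inj u v e1 e2) uV.
lra.
Qed.

End SphereSums.

Lemma lexlt_total {u v : Z2} : u != v -> lexlt u v || lexlt v u.
Proof. by case: u v => [a b] [c d]; rewrite /lexlt /= xpair_eqE; lia. Qed.

Lemma lexlt_irr (u : Z2) : ~~ lexlt u u.
Proof. by case: u => [a b]; rewrite /lexlt /=; lia. Qed.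

Lemma lexlt_asym {u v : Z2} : lexlt u v -> ~~ lexlt v u.
Proof. by case: u v => [a b] [c d]; rewrite /lexlt /=; lia. Qed.

Definition edge0 : edge := exist _ ((0, 0), (0, 1)) isT.

(* The edge [{u, v}]; junk value [edge0] when [u = v]. *)
Definition edge_of (u v : Z2) : edge :=
  insubd edge0 (if lexlt u v then (u, v) else (v, u)).

Lemma val_edge_of {u v : Z2} : lexlt u v -> val (edge_of u v) = (u, v).
Proof. by move=> uv; rewrite /edge_of uv insubdK. Qed.

Lemma val_edge_of_swap {u v : Z2} : lexlt v u -> val (edge_of u v) = (v, u).
Proof. by move=> vu; rewrite /edge_of (negbTE (lexlt_asym vu)) insubdK. Qed.

Lemma val_edge_of_cases {u v : Z2} : u != v ->
  val (edge_of u v) = (u, v) \/ val (edge_of u v) = (v, u).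
Proof.
by move=> /lexlt_total/orP[/val_edge_of|/val_edge_of_swap] ->; [left | right].
Qed.

Lemma edge_ofC (u v : Z2) : edge_of u v = edge_of v u.
Proof.
have [->|uv] := eqVneq u v; first by [].
apply: val_inj; case/orP: (lexlt_total uv) => h.
  by rewrite (val_edge_of h) (val_edge_of_swap h).
by rewrite (val_edge_of h) (val_edge_of_swap h).
Qed.

Lemma edge_of_val (e : edge) : edge_of (val e).1 (val e).2 = e.
Proof. by apply: val_inj; rewrite val_edge_of ?(valP e) //; case: (val e). Qed.

Lemma edge_neq (e : edge) : (val e).1 != (val e).2.
Proof. by apply/eqP => h; have := valP e; rewrite h (negbTE (lexlt_irr _)). Qed.

Definition adjb (w : edge -> bool) (u v : Z2) : bool := (u != v) && w (edge_of u v).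

Lemma adjP (w : edge -> bool) (u v : Z2) : adj w u v <-> adjb w u v.
Proof.
split => [[e [we E]]|/andP[uv wuv]]; last first.
  by exists (edge_of u v); split => //; apply: val_edge_of_cases.
have [uv e_uv] : u != v /\ edge_of u v = e.
  case: E => E; have := edge_neq e; rewrite E /= => neq.
    by split => //; rewrite -(edge_of_val e) E.
  by rewrite eq_sym; split => //; rewrite edge_ofC -(edge_of_val e) E.
by rewrite /adjb uv e_uv.
Qed.

Lemma adjbC (w : edge -> bool) (u v : Z2) : adjb w u v = adjb w v u.
Proof. by rewrite /adjb eq_sym edge_ofC. Qed.

Lemma conn_sym (w : edge -> bool) (u v : Z2) : conn w u v -> conn w v u.
Proof.
elim=> [a b /adjP ab|a|a b c _ ba _ cb]; last exact: rt_trans cb ba.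
  by apply/rt_step/adjP; rewrite adjbC.
exact: rt_refl.
Qed.

Definition path_edges (x : Z2) (p : seq Z2) : seq edge := pairmap edge_of x p.
Definition path_steps (x : Z2) (p : seq Z2) : seq Z2 := pairmap (fun a b => subZ2 b a) x p.

Lemma adjb_path_open (w : edge -> bool) (x : Z2) (p : seq Z2) :
  path (adjb w) x p -> all w (path_edges x p).
Proof. by elim: p x => [|y p IH] x //= /andP[/andP[_ ->] /IH]. Qed.

Lemma conn_uniq_path (w : edge -> bool) (v x : Z2) : conn w v x ->
  exists p, [/\ uniq (x :: p), all w (path_edges x p) & last x p = v].
Proof.
move=> /conn_sym xv.
have [p [xp_path xp_last]] : exists p, path (adjb w) x p /\ last x p = v.
  elim: xv => [a b /adjP ab|a|a b c _ [p1 [path1 last1]] _ [p2 [path2 last2]]].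
  - by exists [:: b]; rewrite /= ab.
  - by exists [::].
  - by exists (p1 ++ p2); rewrite cat_path last_cat last1 path1 path2.
case: (shortenP xp_path) xp_last => p' p'_path up' _ p'_last.
by exists p'; split => //; apply: adjb_path_open.
Qed.

Lemma open_path_conn (w : edge -> bool) (x : Z2) (p : seq Z2) :
  uniq (x :: p) -> all w (path_edges x p) -> conn w (last x p) x.
Proof.
elim: p x => [|y p IH] x; first by move=> _ _; exact: rt_refl.
rewrite /= => /andP[x_yp uyp] /andP[wxy all_p]; apply: rt_trans (IH y uyp all_p) _.
apply/rt_step/adjP; rewrite /adjb edge_ofC wxy andbT.
by apply: contraNneq x_yp => ->; rewrite mem_head.
Qed.

Lemma mem_path_edges {x : Z2} {p : seq Z2} {e} : uniq (x :: p) -> e \in path_edges x p ->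
  (val e).1 \in x :: p /\ (val e).2 \in x :: p.
Proof.
elim: p x => [|y p IH] x //= /andP[x_yp uyp]; rewrite in_cons => /orP[/eqP ->|e_p].
  have xy : x != y by apply: contraNneq x_yp => ->; rewrite mem_head.
  by case: (val_edge_of_cases xy) => ->; rewrite /= !in_cons !eqxx ?orbT.
by have [h1 h2] := IH y uyp e_p; split; rewrite in_cons ?h1 ?h2 orbT.
Qed.

Lemma uniq_path_edges {x : Z2} {p : seq Z2} : uniq (x :: p) -> uniq (path_edges x p).
Proof.
elim: p x => [|y p IH] x //= /andP[x_yp uyp]; rewrite IH // andbT.
apply/negP => /(mem_path_edges uyp) [].
have xy : x != y by apply: contraNneq x_yp => ->; rewrite mem_head.
by case: (val_edge_of_cases xy) => -> /= => [x_in _|_ x_in]; rewrite x_in in x_yp.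
Qed.

Lemma path_steps_inj (x : Z2) : injective (path_steps x).
Proof.
move=> p q; elim: p q x => [|y p IH] [|z q] x //= [/addIr e1 /addIr e2 pq].
have y_z : y = z by case: y z e1 e2 {pq} => [? ?] [? ?] /= -> ->.
by rewrite -y_z in pq *; rewrite (IH q y pq).
Qed.

Lemma sumZ2_path_steps (x : Z2) (p : seq Z2) : sumZ2 (path_steps x p) = subZ2 (last x p) x.
Proof.
elim: p x => [|y p IH] x; first by rewrite /sumZ2 /subZ2 !big_nil /= !subrr.
move: (IH y); rewrite /= /sumZ2 !big_cons => -[-> ->].
by rewrite /subZ2 /=; congr (_, _); ring.
Qed.

Lemma normi_le_add_norm1 (v x : Z2) : (normi v <= normi x + norm1 (subZ2 v x))%N.
Proof. by rewrite /normi /norm1 /subZ2 /=; lia. Qed.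

Lemma sum_uniq_le_esum (R : realType) (T : choiceType) (f : T -> R) (U : seq T) :
  (forall t, 0 <= f t) -> uniq U ->
  ((\sum_(u <- U) f u)%:E <= \esum_(t in [set: T]) (f t)%:E)%E.
Proof.
move=> f_ge0 uU; rewrite -sumEFin; apply: esum_ge; exists [set` U].
  by split; [exact: finite_seq | by []].
by rewrite (fsbig_seq _ _ uU).
Qed.

Lemma prod_eps_prob_path_edges (R : realType) (J : Z2 -> R) (eps : R) (x : Z2) (p : seq Z2) :
  (forall y, J y = J (subZ2 (0, 0) y)) -> uniq (x :: p) ->
  \prod_(e <- path_edges x p) eps_prob J eps e = \prod_(y <- path_steps x p) (eps * J y).
Proof.
move=> J_sym; elim: p x => [|y p IH] x; first by rewrite !big_nil.
rewrite /= => /andP[x_yp uyp]; rewrite !big_cons IH //; congr (_ * _).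
have xy : x != y by apply: contraNneq x_yp => ->; rewrite mem_head.
rewrite /eps_prob; case: (val_edge_of_cases xy) => -> //=.
by rewrite J_sym /subZ2 /=; congr (eps * J (_, _)); ring.
Qed.

Section PathSums.
Variables (R : realType) (J : Z2 -> R) (alpha Jc eps : R).
Hypothesis J_ge0 : forall y, 0 <= J y.
Hypothesis J_sum_le1 : forall U : seq Z2, uniq U -> \sum_(u <- U) J u <= 1.
Hypothesis alpha_ge2 : 2 <= alpha.
Hypothesis Jc_ge0 : 0 <= Jc.
Hypothesis J_decay : forall y : Z2, y != (0, 0) -> J y <= Jc * (norm1 y)%:R `^ (- alpha).
Hypothesis eps_ge0 : 0 <= eps.
Hypothesis eps_small : 4 * 2 `^ alpha * eps <= 1.

(* Group the paths by their endpoint [v]: the walks to [v] cost at most [2 Jc / |v - x|^alpha],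
   and the sphere of radius [k] sums these to order [(k - |x|)^(1 - alpha)]. *)
Lemma sum_prod_paths_le (x : Z2) (k : nat) (Ps : seq (seq Z2)) :
  (normi x < k)%N -> uniq Ps -> (forall p, p \in Ps -> normi (last x p) = k) ->
  \sum_(p <- Ps) \prod_(y <- path_steps x p) (eps * J y)
    <= 32 * Jc / ((k - normi x)%N%:R) `^ (alpha - 1).
Proof.
move=> x_lt_k uPs Ps_k; rewrite (sumr_partition_seq _ (last x)).
set V := undup (map (last x) Ps).
have V_k v : v \in V -> normi v = k by rewrite mem_undup => /mapP[p /Ps_k <- ->].
apply: (@le_trans _ _ (\sum_(v <- V) 2 * Jc / (norm1 (subZ2 v x))%:R `^ alpha)).
  rewrite big_seq [leRHS]big_seq; apply: ler_sum => v /V_k v_k.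
  have -> : \sum_(p <- Ps | last x p == v) \prod_(y <- path_steps x p) (eps * J y) =
     \sum_(ys <- map (path_steps x) [seq p <- Ps | last x p == v]) \prod_(y <- ys) (eps * J y).
    by rewrite big_map big_filter.
  apply: sum_prod_steps_le => //; first by have := alpha_ge2; lra.
  - by have := normi_le_add_norm1 v x; rewrite v_k; lia.
  - by rewrite map_inj_in_uniq ?filter_uniq // => p q _ _ /path_steps_inj.
  - by move=> ? /mapP[p]; rewrite mem_filter => /andP[/eqP <- _] ->; rewrite sumZ2_path_steps.
have -> : 32 * Jc / ((k - normi x)%N%:R) `^ (alpha - 1) =
          2 * Jc * (16 / ((k - normi x)%N%:R) `^ (alpha - 1)) by ring.
by rewrite -mulr_sumr ler_wpM2l ?mulr_ge0 ?sum_sphere_inv_powR_le ?undup_uniq.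
Qed.

End PathSums.

Section PercolationEvents.
Context {d} {T : measurableType d} (omega : T -> edge -> bool).

Definition open_path_event (x : Z2) (p : seq Z2) : set T :=
  \bigcap_(e in [set` path_edges x p]) [set t | omega t e].

Lemma open_path_eventP x p t : open_path_event x p t <-> all (omega t) (path_edges x p).
Proof. by split => [h|/allP h e]; [apply/allP => e; exact: h | exact: h]. Qed.

Definition decode_path (Pe : pred Z2) (x : Z2) (n : nat) : option (seq Z2) :=
  obind (fun p => if uniq (x :: p) && Pe (last x p) then Some p else None)
        (@pickle_inv (seq Z2) n).

Lemma decode_pathK Pe x : ocancel (decode_path Pe x) pickle.
Proof.
move=> n; rewrite /decode_path; have := @pickle_invK (seq Z2) n.
by case: (pickle_inv n) => [q /= h|//]; case: ifP.
Qed.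

Lemma decode_pathP {Pe x n p} : decode_path Pe x n = Some p -> uniq (x :: p) /\ Pe (last x p).
Proof.
by rewrite /decode_path; case: (pickle_inv n) => [q|] //=; case: ifP => // /andP[? ?] [<-].
Qed.

Definition path_event (Pe : pred Z2) (x : Z2) (n : nat) : set T :=
  if decode_path Pe x n is Some p then open_path_event x p else set0.

Definition reach_event (Pe : pred Z2) (x : Z2) : set T :=
  [set t | exists v, Pe v /\ conn (omega t) v x].

Lemma reach_eventE Pe x : reach_event Pe x = \bigcup_n path_event Pe x n.
Proof.
apply/seteqP; split => t.
  move=> [v [Pv /conn_uniq_path [p [up p_open p_v]]]]; exists (pickle p) => //.
  rewrite /path_event /decode_path pickleK_inv /= -/(uniq (x :: p)) up p_v Pv.
  exact/open_path_eventP.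
move=> [n _]; rewrite /path_event; case En: decode_path => [p|//] /open_path_eventP p_open.
have [up Pp] := decode_pathP En.
by exists (last x p); split => //; exact: open_path_conn.
Qed.

Hypothesis measurable_open : forall e, measurable [set t | omega t e].

Lemma measurable_path_event Pe x n : measurable (path_event Pe x n).
Proof.
rewrite /path_event; case: decode_path => [p|]; last exact: measurable0.
by apply: fin_bigcap_measurable; [exact: finite_seq | move=> e _; exact: measurable_open].
Qed.

Lemma measurable_reach_event Pe x : measurable (reach_event Pe x).
Proof. by rewrite reach_eventE; apply: bigcupT_measurable => n; exact: measurable_path_event. Qed.

End PercolationEvents.

Lemma mA_natP (R : realType) (w : edge -> bool) (x : Z2) (k : nat) : (0 < k)%N ->
  mA R w x = (k%:R)%:E <->
  (exists v, normi v = k /\ conn w v x) /\ ~ (exists u, (k < normi u)%N /\ conn w u x).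
Proof.
move=> k_gt0; rewrite /mA; set S := [set _ | v in _].
have S_ub v : conn w v x -> S ((normi v)%:R : R)%:E by exists v.
split=> [supS|[[v [v_k v_x]] no_u]].
  split=> [|[u [k_lt_u /S_ub/ereal_sup_ubound]]]; last by rewrite supS lee_fin ler_nat; lia.
  have : (((k.-1)%:R : R)%:E < ereal_sup S)%E by rewrite supS lte_fin ltr_nat; lia.
  case/ereal_sup_gt => _ [v v_x <-]; rewrite lte_fin ltr_nat => k_le_v.
  move: (ereal_sup_ubound (S_ub v v_x)); rewrite supS lee_fin ler_nat => v_le_k.
  by exists v; split => //; lia.
apply/eqP; rewrite eq_le; apply/andP; split.
  apply: ge_ereal_sup => _ [u u_x <-]; rewrite lee_fin ler_nat leqNgt.
  by apply/negP => k_lt_u; apply: no_u; exists u.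
by rewrite -v_k; exact: ereal_sup_ubound (S_ub v v_x).
Qed.

Lemma mA_nat_event (R : realType) {d} {T : measurableType d} (omega : T -> edge -> bool)
    (x : Z2) {k : nat} : (0 < k)%N ->
  [set t | mA R (omega t) x = (k%:R)%:E] =
  reach_event omega (fun v => normi v == k) x `&` ~` reach_event omega (fun u => k < normi u)%N x.
Proof.
move=> k_gt0; apply/seteqP; split => t /=.
  move/(mA_natP R _ x k k_gt0) => [[v [v_k v_x]] no_u]; split; first by exists v; rewrite v_k.
  by move=> [u [k_lt_u u_x]]; apply: no_u; exists u.
move=> [[v [/eqP v_k v_x]] no_u]; apply/(mA_natP R _ x k k_gt0); split; first by exists v.
by move=> [u [k_lt_u u_x]]; apply: no_u; exists u.
Qed.

Section SphereReachBound.
Context {R : realType} {J : Z2 -> R} {alpha Jc eps : R}.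
Hypothesis J_ge0 : forall y, 0 <= J y.
Hypothesis J_sym : forall y, J y = J (subZ2 (0, 0) y).
Hypothesis J_sum_le1 : forall U : seq Z2, uniq U -> \sum_(u <- U) J u <= 1.
Hypothesis alpha_ge2 : 2 <= alpha.
Hypothesis Jc_ge0 : 0 <= Jc.
Hypothesis J_decay : forall y : Z2, y != (0, 0) -> J y <= Jc * (norm1 y)%:R `^ (- alpha).
Hypothesis eps_ge0 : 0 <= eps.
Hypothesis eps_small : 4 * 2 `^ alpha * eps <= 1.
Context {d : measure_display} {T : measurableType d} {P : probability T R}.
Context {omega : T -> edge -> bool}.
Hypothesis percolation : bernoulli_percolation P omega (eps_prob J eps).

Lemma probability_path_event Pe x n :
  P (path_event omega Pe x n) =
  (oapp (fun p => \prod_(y <- path_steps x p) (eps * J y)) 0 (decode_path Pe x n))%:E.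
Proof.
have [_ P_open P_indep] := percolation.
rewrite /path_event; case En: decode_path => [p|] /=; last exact: measure0.
have [up _] := decode_pathP En.
rewrite /open_path_event (P_indep _ (uniq_path_edges up)).
by rewrite (eq_bigr _ (fun e _ => P_open e)) prodEFin prod_eps_prob_path_edges.
Qed.

(* Union bound over the self-avoiding paths from [x] to the sphere of radius [k]. *)
Lemma reach_sphere_le {x : Z2} {k : nat} : (normi x < k)%N ->
  (P (reach_event omega (fun v => normi v == k) x)
     <= (32 * Jc / ((k - normi x)%N%:R) `^ (alpha - 1))%:E)%E.
Proof.
move=> x_lt_k; have [P_meas _ _] := percolation; set Pe := fun v => normi v == k.
apply: le_trans (_ : _ <= \sum_(0 <= n <oo) P (path_event omega Pe x n))%E _.
  apply: measure_sigma_subadditive; rewrite -?reach_eventE //.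
    by move=> n; exact: measurable_path_event.
  exact: measurable_reach_event.
apply: lime_le; first by apply: is_cvg_nneseries => n _ _; exact: measure_ge0.
apply: nearW => N; under eq_bigr do rewrite probability_path_event.
rewrite sumEFin -big_pmap lee_fin; apply: sum_prod_paths_le => //.
  exact: (pmap_uniq (decode_pathK Pe x) (iota_uniq _ _)).
by move=> p; rewrite mem_pmap => /mapP[n _ /esym/decode_pathP [_ /eqP]].
Qed.

End SphereReachBound.

Theorem propositionA2 (R : realType) (J : Z2 -> R) (alpha Jc : R) :
  (forall x, 0 <= J x) ->
  (forall x, J x = J (subZ2 (0, 0) x)) ->
  (\esum_(x in [set: Z2]) (J x)%:E = 1%E) ->
  4 < alpha -> 0 <= Jc ->
  (forall x : Z2, x != (0, 0) -> J x <= Jc * (norm1 x)%:R `^ (- alpha)) ->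
  exists eps0 : R, 0 < eps0 /\
    forall eps : R, 0 < eps -> eps <= eps0 ->
    exists C1 : R,
      forall d (T : measurableType d) (P : probability T R) (omega : T -> edge -> bool),
        bernoulli_percolation P omega (eps_prob J eps) ->
        forall (x : Z2) (k : nat), (normi x < k)%N ->
          (P [set t | mA R (omega t) x = (k%:R)%:E]
             <= (C1 / (k%:R - (normi x)%:R) `^ (alpha - 1))%:E)%E.
Proof.
move=> J_ge0 J_sym J_esum alpha_gt4 Jc_ge0 J_decay.
have J_sum_le1 U : uniq U -> \sum_(u <- U) J u <= 1.
  by move=> uU; rewrite -lee_fin -J_esum sum_uniq_le_esum.
have c_gt0 : 0 < 4 * 2 `^ alpha by rewrite mulr_gt0 ?powR_gt0.
exists (4 * 2 `^ alpha)^-1; split => [|eps eps_gt0 eps_le]; first by rewrite invr_gt0.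
exists (32 * Jc) => d T P omega perc x k x_lt_k.
have [P_meas _ _] := perc.
have eps_small : 4 * 2 `^ alpha * eps <= 1 by rewrite mulrC -ler_pdivlMr // div1r.
have k_gt0 : (0 < k)%N by apply: leq_ltn_trans x_lt_k.
rewrite -natrB ?(ltnW x_lt_k) // (mA_nat_event R omega x k_gt0).
have alpha_ge2 : 2 <= alpha by lra.
apply: le_trans (reach_sphere_le J_ge0 J_sym J_sum_le1 alpha_ge2 Jc_ge0 J_decay
                   (ltW eps_gt0) eps_small perc x_lt_k).
apply: le_measure; rewrite ?inE; last by move=> t [].
  by apply: measurableI; [|apply: measurableC]; exact: measurable_reach_event.
exact: measurable_reach_event.
Qed.
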